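(* Let $k\in\mathbb N$. Every $k$-ary dependency notion $\mathbf D$ is $\gamma$-bounded for $\gamma(n)=n^k$; that is, for every finite structure $\mathfrak M$ with domain $M$, every team $X$ and every $k$-tuple $\vec v$ of variables in the domain of $X$, if $\mathfrak M\models_X\mathbf D\vec v$ then there is $Y\subseteq X$ with $|Y|\le|M|^k$ and $\mathfrak M\models_Y\mathbf D\vec v$.
   Context: For a structure $\mathfrak M$ with domain $M$, a team $X$ is a set of assignments $s:V\to M$, $V$ a finite set of variables; for a tuple $\vec v$ in $V$, $X(\vec v)=\{s(\vec v):s\in X\}$. A $k$-ary dependency notion $\mathbf D$ is an isomorphism-closed class of structures $(M,R)$ with $R$ a $k$-ary relation on $M$, and $\mathfrak M\models_X\mathbf D\vec v$ iff $(M,X(\vec v))\in\mathbf D$. *)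

From mathcomp Require Import all_boot.
Set Implicit Arguments. Unset Strict Implicit. Unset Printing Implicit Defensive.

(* Only finite domains are relevant here, so the
   class is given by its finite members: dn_mem M R  <->  (M, R) \in D. *)
Record depNotion (k : nat) := DepNotion {
  dn_mem : forall M : finType, {set k.-tuple M} -> Prop;
  dn_iso : forall (M M' : finType) (f : M -> M'), bijective f ->
    forall R : {set k.-tuple M},
      dn_mem R -> dn_mem [set map_tuple f t | t in R]
}.

Definition team (V M : finType) := {set {ffun V -> M}}.

Definition team_rel (V M : finType) (k : nat) (X : team V M) (v : k.-tuple V)
  : {set k.-tuple M} := [set map_tuple (fun x => s x) v | s : {ffun V -> M} in X].

Definition sat_dep (k : nat) (D : depNotion k) (V M : finType)
  (X : team V M) (v : k.-tuple V) : Prop := dn_mem D (team_rel X v).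

From mathcomp Require Import all_boot.

(* Choose one representative in X of each value of the map h s = s(v): the
   representatives form a subteam with the same X(v), and h is injective on
   them, so there are at most as many as k-tuples over M. *)

Section ImsetTransversal.

Variables (A B : finType) (f : A -> B) (X : {set A}).

Definition imset_repr (a : A) : option A := [pick b in X | f b == f a].

Definition imset_transversal : {set A} := [set a in X | imset_repr a == Some a].

Lemma imset_reprP {a : A} :
  a \in X -> exists2 b, imset_repr a = Some b & b \in X /\ f b = f a.
Proof.
move=> Xa; rewrite /imset_repr; case: pickP => [b /andP[Xb /eqP fb]|none].
  by exists b.
by move: (none a); rewrite Xa eqxx.
Qed.

Lemma imset_repr_eq {a a' : A} : f a = f a' -> imset_repr a = imset_repr a'.
Proof. by move=> faa'; rewrite /imset_repr faa'. Qed.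

Lemma imset_transversal_sub : imset_transversal \subset X.
Proof. by apply/subsetP=> a; rewrite inE => /andP[]. Qed.

Lemma imset_transversal_imset : f @: imset_transversal = f @: X.
Proof.
apply/eqP; rewrite eqEsubset imsetS ?imset_transversal_sub //=.
apply/subsetP=> _ /imsetP[a Xa ->].
have [b ra [Xb fb]] := imset_reprP Xa.
apply/imsetP; exists b; last by rewrite fb.
by rewrite inE Xb (imset_repr_eq fb) ra eqxx.
Qed.

Lemma imset_transversal_inj : {in imset_transversal &, injective f}.
Proof.
move=> a a'; rewrite !inE => /andP[_ /eqP ra] /andP[_ /eqP ra'] faa'.
by apply: Some_inj; rewrite -ra -ra' (imset_repr_eq faa').
Qed.

Lemma card_imset_transversal : #|imset_transversal| = #|f @: X|.
Proof. by rewrite -imset_transversal_imset (card_in_imset imset_transversal_inj). Qed.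

End ImsetTransversal.

Arguments imset_transversal {A B} f X.

Theorem mainTheorem12 (k : nat) (D : depNotion k) (M V : finType)
  (X : team V M) (v : k.-tuple V) :
  sat_dep D X v ->
  exists Y : team V M, Y \subset X /\ #|Y| <= #|M| ^ k /\ sat_dep D Y v.
Proof.
pose h (s : {ffun V -> M}) := map_tuple (fun x => s x) v.
have relE (Z : team V M) : team_rel Z v = h @: Z by [].
move=> HD; exists (imset_transversal h X); split; first exact: imset_transversal_sub.
split; last by rewrite /sat_dep relE imset_transversal_imset -relE.
by rewrite card_imset_transversal -card_tuple max_card.
Qed.
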